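(* Let $G=\vec{C}_5^{1,2}$ and let $\mathbb K$ be a field of characteristic $0$. Then for every $n\ge 1$, $\dim_{\mathbb K}\Omega_n(G;\mathbb K)=10$, and a basis of $\Omega_n(G;\mathbb K)$ is given by the ten elements $\{\alpha_a^{(n)},\beta_a^{(n)}\}_{a\in\mathbb Z_5}$, where \[ \alpha_a^{(n)}=e_{a,(a+1),(a+2),\ldots,(a+n)},\qquad \beta_a^{(n)}=\sum_{j=1}^n(-1)^{n-j}\,e_{a,a+1,\ldots,a+j-1,a+j+1,a+j+2,\ldots,a+n+1}, \] all vertex labels being read modulo $5$.
   Context: GLMY path complex. Let $\mathbb K$ be a field of characteristic $0$ and $V$ a finite set. An elementary $n$-path is a sequence $(v_0,\dots,v_n)$ of vertices, written $e_{v_0v_1\cdots v_n}$; $\Lambda_n(V)$ is the $\mathbb K$-span of elementary $n$-paths, with boundary $\partial e_{v_0\cdots v_n}=\sum_{j=0}^n(-1)^j e_{v_0\cdots\widehat{v_j}\cdots v_n}$. The regular path space $R_n(V)$ is the quotient of $\Lambda_n(V)$ by the span of elementary paths with $v_{k-1}=v_k$ for some $k$ (such paths are identified with $0$); $\partial$ descends to $R_*$. For a finite digraph $G=(V,E)$ without loops, $A_n(G)\subset R_n(V)$ is the span of elementary paths $e_{v_0\cdots v_n}$ with $(v_k\to v_{k+1})\in E$ for all $k$ (allowed paths). Set $\Omega_0=A_0$, $\Omega_1=A_1$, and $\Omega_n(G)=\{u\in A_n(G):\partial u\in A_{n-1}(G)\}$ for $n\ge 2$. Then $(\Omega_*(G),\partial)$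 is a chain complex (the path complex) and its homology $H_n^{\mathrm{path}}(G;\mathbb K)$ is the path homology. Circulant digraph: for $n\ge 3$ and $S\subset\mathbb Z_n$ with $0\notin S$, $\vec{C}_n^S$ has vertex set $\mathbb Z_n$ and an arrow $a\to a+s$ for every $a\in\mathbb Z_n$, $s\in S$; $\vec C_n^{1,2}$ means $S=\{1,2\}$. *)

From HB Require Import structures.
From mathcomp Require Import all_boot all_order all_algebra.
Set Implicit Arguments.
Unset Strict Implicit.
Unset Printing Implicit Defensive.
Import GRing.Theory.
Local Open Scope ring_scope.

(* An n-chain (linear combination of elementary n-paths
   e_{v_0...v_n}) is represented by its coefficient function on
   (n.+1)-tuples of vertices, an element of the K-vector space
   {ffun (n.+1).-tuple V -> K^o}.  The regular space R_n is modelled by the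
   chains supported on regular tuples; the quotient map Lambda_n -> R_n
   discards the coefficients on irregular tuples. *)

Section PathComplex.
Variables (K : fieldType) (V : finType) (E : rel V).

Definition chain (n : nat) := {ffun n.-tuple V -> K^o}.

Definition epath (n : nat) (p : n.-tuple V) : chain n :=
  [ffun q : n.-tuple V => if q == p then 1 else 0].

Definition regular (s : seq V) : bool :=
  if s is x :: t then path (fun a b => a != b) x t else true.

Definition allowed (s : seq V) : bool :=
  if s is x :: t then path E x t else true.

Definition delete_at (j : nat) (s : seq V) : seq V := take j s ++ drop j.+1 s.

Definition bnd (n : nat) (u : chain n.+1) : chain n :=
  [ffun q : n.-tuple V =>
     \sum_(p : n.+1.-tuple V) \sum_(j < n.+1 | delete_at j p == q)
        (-1) ^+ j * u p].

Definition nonallowed_part (n : nat) (u : chain n) : chain n :=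
  [ffun q : n.-tuple V => if allowed q then 0 else u q].

(* the quotient to R_{n-1} followed by the test "lies in A_{n-1}":
   coefficients on regular non-allowed paths *)
Definition reg_nonallowed_part (n : nat) (u : chain n) : chain n :=
  [ffun q : n.-tuple V => if regular q && ~~ allowed q then u q else 0].

Definition A_space (n : nat) : {vspace chain n} :=
  lker (linfun (@nonallowed_part n)).

(* Omega_n for the paths with n+1 vertices (n >= 1):
   u in A_n with  d u in A_{n-1}  (computed in R_{n-1}). *)
Definition Omega (n : nat) : {vspace chain n.+1} :=
  (A_space n.+1 :&: lker (linfun (fun u => reg_nonallowed_part (bnd u))))%VS.

End PathComplex.

Definition circulant (m : nat) (S : {set 'Z_m}) : rel 'Z_m :=
  fun a b => (b - a) \in S.

Definition C5_12 : rel 'Z_5 := circulant [set (1 : 'Z_5); 2].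

Definition alpha (K : fieldType) (n : nat) (a : 'Z_5) : chain K 'Z_5 n.+1 :=
  epath K [tuple (a + (i : nat)%:R : 'Z_5) | i < n.+1].

Definition skip_path (n : nat) (a : 'Z_5) (j : nat) : n.+1.-tuple 'Z_5 :=
  [tuple (a + (if (i < j)%N then (i : nat) else (i : nat).+1)%:R : 'Z_5) | i < n.+1].

Definition beta (K : fieldType) (n : nat) (a : 'Z_5) : chain K 'Z_5 n.+1 :=
  \sum_(1 <= j < n.+1) (-1) ^+ (n - j) *: epath K (skip_path n a j).

From HB Require Import structures.
From mathcomp Require Import all_boot all_order all_algebra.
From mathcomp Require Import ring zify.
Set Implicit Arguments.
Unset Strict Implicit.
Unset Printing Implicit Defensive.
Import GRing.Theory.
Local Open Scope ring_scope.

(* An allowed path of C_5^{1,2} is determined by its first vertex and its steps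
   s_(k+1) - s_k, each equal to 1 or 2.  A chain u in A_n lies in Omega_n iff, for
   every regular path q missing the arrow q_i -> q_(i+1), the coefficients of u on the
   paths obtained by inserting a vertex between q_i and q_(i+1) sum to zero: an allowed
   path produces such a q in its boundary only by deleting that vertex.  For two
   consecutive steps of sum 4 the only allowed filling is (2,2), so u vanishes on paths
   with two adjacent long steps; for sum 3 the fillings (1,2) and (2,1) get opposite
   coefficients.  Swapping steps, u vanishes on every path with two long steps, and its
   coefficient on a path with a single long step at position i is (-1)^(n-i-1) times
   the one on the path whose last step is long.  Hence u is a combination of the
   alpha_a and beta_a; these lie in Omega_n, and they are independent since alpha_a
   (resp. beta_a) is the only one of them not vanishing on the path from a with unit
   steps (resp. with only the last step long). *)

Section TupleSurgery.
Variables (V : finType) (x0 : V).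

(* [x0] is only the default value of [nth]: all indices used below are in range. *)

Lemma nth_delete_at j k (s : seq V) : (j < size s)%N ->
  nth x0 (delete_at j s) k = nth x0 s (if (k < j)%N then k else k.+1).
Proof.
move=> Hj; rewrite /delete_at nth_cat size_take Hj.
case: ifP => Hk; first by rewrite nth_take.
by rewrite nth_drop addSn subnKC // leqNgt Hk.
Qed.

Lemma size_delete_at j (s : seq V) : (j < size s)%N ->
  size (delete_at j s) = (size s).-1.
Proof. by move=> Hj; rewrite /delete_at size_cat size_take Hj size_drop; lia. Qed.

Definition nat_tuple N (f : nat -> V) : N.-tuple V := [tuple f i | i < N].

Lemma nth_nat_tuple N f k : (k < N)%N -> nth x0 (nat_tuple N f) k = f k.
Proof. by move=> Hk; rewrite (nth_mktuple _ _ (Ordinal Hk)). Qed.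

Lemma eq_from_nth_tuple N (p q : N.-tuple V) :
  (forall k, (k < N)%N -> nth x0 p k = nth x0 q k) -> p = q.
Proof.
move=> Hpq; apply: val_inj; apply: (eq_from_nth (x0 := x0)); first by rewrite !size_tuple.
by move=> k; rewrite size_tuple; apply: Hpq.
Qed.

Definition tinsert n j (c : V) (q : n.-tuple V) : n.+1.-tuple V :=
  nat_tuple n.+1 (fun k =>
    if (k < j)%N then nth x0 q k else if k == j then c else nth x0 q k.-1).

Definition tdelete n (p : n.+1.-tuple V) j : n.-tuple V :=
  nat_tuple n (fun k => nth x0 p (if (k < j)%N then k else k.+1)).

Definition tset N (p : N.-tuple V) j (c : V) : N.-tuple V :=
  nat_tuple N (fun k => if k == j then c else nth x0 p k).

Lemma delete_atE n (p : n.+1.-tuple V) j : (j < n.+1)%N ->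
  delete_at j p = tdelete p j.
Proof.
move=> Hj; apply: (eq_from_nth (x0 := x0)); first by rewrite size_delete_at ?size_tuple.
move=> k; rewrite size_delete_at size_tuple // => Hk.
by rewrite nth_delete_at ?size_tuple // nth_nat_tuple.
Qed.

Lemma tinsert_eq n (p : n.+1.-tuple V) (q : n.-tuple V) j c : (j <= n)%N ->
  (tinsert j c q == p) = (c == nth x0 p j) && (tdelete p j == q).
Proof.
move=> Hj; apply/eqP/andP => [<-|[/eqP -> /eqP <-]].
  rewrite nth_nat_tuple // ltnn eqxx; split=> //; apply/eqP/eq_from_nth_tuple => k Hk.
  rewrite !nth_nat_tuple //; last by case: ifP; lia.
  case: (ltnP k j) => Hkj /=; first by rewrite Hkj.
  by rewrite ltnNge (leqW Hkj) /= gtn_eqF.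
apply: eq_from_nth_tuple => k Hk; rewrite nth_nat_tuple //.
case: ltngtP => Hkj; last by rewrite Hkj.
  by rewrite nth_nat_tuple ?Hkj //; lia.
by rewrite nth_nat_tuple ?ifF ?prednK //; lia.
Qed.

Lemma tinsert_tdelete n (p : n.+1.-tuple V) j c : (j <= n)%N ->
  tinsert j c (tdelete p j) = tset p j c.
Proof.
move=> Hj; apply: eq_from_nth_tuple => k Hk.
rewrite [LHS]nth_nat_tuple // [RHS]nth_nat_tuple //.
case: ltngtP => Hkj //.
  by rewrite nth_nat_tuple ?Hkj //; lia.
by rewrite nth_nat_tuple ?ifF ?prednK //; lia.
Qed.

Lemma tset_nth N (p : N.-tuple V) j : tset p j (nth x0 p j) = p.
Proof. by apply: eq_from_nth_tuple => k Hk; rewrite nth_nat_tuple //; case: eqP => // ->. Qed.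

Lemma nth_tinsert_lt n (q : n.-tuple V) j c k : (k < j)%N -> (j <= n)%N ->
  nth x0 (tinsert j c q) k = nth x0 q k.
Proof. by move=> Hkj Hj; rewrite nth_nat_tuple ?Hkj //; lia. Qed.

Lemma nth_tinsert_gt n (q : n.-tuple V) j c k : (j <= k)%N -> (k < n)%N ->
  nth x0 (tinsert j c q) k.+1 = nth x0 q k.
Proof. by move=> Hjk Hk; rewrite nth_nat_tuple ?ifF ?gtn_eqF //; lia. Qed.

Lemma sum_tinsert (K : nmodType) n (q : n.-tuple V) (p : n.+1.-tuple V) j (x : K) :
  (j <= n)%N ->
  \sum_(c : V) (if tinsert j c q == p then x else 0) = if tdelete p j == q then x else 0.
Proof.
move=> Hj; under eq_bigr => c _ do rewrite tinsert_eq //.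
case: (tdelete p j == q); last by apply: big1 => c _; rewrite andbF.
by rewrite -big_mkcond (big_pred1 (nth x0 p j)) // => c; rewrite /= andbT.
Qed.

End TupleSurgery.

Section DefectLinear.
Variables (K : fieldType) (V : finType) (E : rel V).

Lemma nonallowed_part_is_linear n : linear (@nonallowed_part K V E n).
Proof.
move=> a u v; apply/ffunP => q; rewrite !ffunE.
by case: ifP; rewrite ?scaler0 ?addr0.
Qed.

Definition bnd_defect n (u : chain K V n.+1) : chain K V n :=
  reg_nonallowed_part E (bnd u).

Lemma bnd_defect_is_linear n : linear (@bnd_defect n).
Proof.
move=> a u v; apply/ffunP => q; rewrite !ffunE.
case: ifP; rewrite ?scaler0 ?addr0 // => _.
rewrite scaler_sumr -big_split; apply: eq_bigr => p _.
rewrite scaler_sumr -big_split; apply: eq_bigr => j _ /=.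
by rewrite !ffunE /= scalerAr mulrDr.
Qed.

End DefectLinear.

HB.instance Definition _ (K : fieldType) (V : finType) (E : rel V) n :=
  GRing.isLinear.Build K (chain K V n) (chain K V n) *:%R
    (@nonallowed_part K V E n) (@nonallowed_part_is_linear K V E n).
HB.instance Definition _ (K : fieldType) (V : finType) (E : rel V) n :=
  GRing.isLinear.Build K (chain K V n.+1) (chain K V n) *:%R
    (@bnd_defect K V E n) (@bnd_defect_is_linear K V E n).

Section OmegaMembership.
Variables (K : fieldType) (V : finType) (E : rel V) (x0 : V).

Definition arrow_at (s : seq V) k := E (nth x0 s k) (nth x0 s k.+1).

Lemma allowedP (s : seq V) :
  reflect (forall k, (k.+1 < size s)%N -> arrow_at s k) (allowed E s).
Proof.
case: s => [|x t] /=; first by constructor.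
by apply: (iffP (pathP x0)) => Hs k; apply: Hs.
Qed.

Lemma regularP (s : seq V) :
  reflect (forall k, (k.+1 < size s)%N -> nth x0 s k != nth x0 s k.+1) (regular s).
Proof.
case: s => [|x t] /=; first by constructor.
by apply: (iffP (pathP x0)) => Hs k; apply: Hs.
Qed.

Lemma A_spaceP n (u : chain K V n) :
  reflect (forall p : n.-tuple V, ~~ allowed E p -> u p = 0) (u \in A_space K E n).
Proof.
rewrite memv_ker lfunE /=; apply: (iffP eqP) => [Hu p Hp|Hu].
  by move/ffunP: Hu => /(_ p); rewrite !ffunE (negbTE Hp).
by apply/ffunP => p; rewrite !ffunE; case: ifP => // Hp; rewrite Hu ?Hp.
Qed.

Lemma OmegaP n (u : chain K V n.+1) :
  reflect ((forall p : n.+1.-tuple V, ~~ allowed E p -> u p = 0) /\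
           (forall q : n.-tuple V, regular q -> ~~ allowed E q -> bnd u q = 0))
    (u \in Omega K E n).
Proof.
have kerP : reflect (forall q : n.-tuple V, regular q -> ~~ allowed E q -> bnd u q = 0)
    (u \in lker (linfun (@bnd_defect K V E n))).
  rewrite memv_ker lfunE /=; apply: (iffP eqP) => [Hu q Hr Ha|Hu].
    by move/ffunP: Hu => /(_ q); rewrite !ffunE Hr Ha.
  by apply/ffunP => q; rewrite ffunE [RHS]ffunE; case: ifP => // /andP[Hr Ha]; apply: Hu.
rewrite memv_cap; apply: (iffP andP) => -[Hu Hbnd].
  by split; [apply/A_spaceP | apply/kerP].
by split; [apply/A_spaceP | apply/kerP].
Qed.

Lemma allowed_delete_gap n (p : n.+1.-tuple V) j i :
  allowed E p -> (j < n.+1)%N -> (i.+1 < n)%N ->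
  ~~ arrow_at (delete_at j p) i -> j = i.+1.
Proof.
move=> /allowedP Hp Hj Hi; rewrite /arrow_at !nth_delete_at ?size_tuple //.
case: (ltngtP j i.+1) => // Hji; case/negP.
  by apply: Hp; rewrite size_tuple.
by apply: Hp; rewrite size_tuple; lia.
Qed.

Lemma bnd_gap n (u : chain K V n.+1) (q : n.-tuple V) i :
  (forall p : n.+1.-tuple V, ~~ allowed E p -> u p = 0) -> (i.+1 < n)%N -> ~~ arrow_at q i ->
  bnd u q = (-1) ^+ i.+1 * \sum_(c : V) u (tinsert x0 i.+1 c q).
Proof.
move=> Hu Hi Hq; have Hi1 : (i.+1 < n.+1)%N by lia.
rewrite ffunE; transitivity (\sum_(p : n.+1.-tuple V)
    (-1) ^+ i.+1 * \sum_(c : V) (if tinsert x0 i.+1 c q == p then u p else 0)).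
  apply: eq_bigr => p _; rewrite sum_tinsert; last by lia.
  have [Hp|/Hu ->] := boolP (allowed E p); last first.
    by rewrite if_same mulr0 big1 // => j _; rewrite mulr0.
  have [Hd|Hd] := eqVneq (tdelete x0 p i.+1) q.
    rewrite (big_pred1 (Ordinal Hi1)) // => j /=; apply/idP/eqP => [/eqP Hj|->].
      by apply: val_inj; apply: (allowed_delete_gap Hp (ltn_ord j) Hi); rewrite Hj.
    by rewrite /= (delete_atE x0) // Hd.
  rewrite mulr0 big_pred0 // => j; apply/negP => /eqP Hj; case/eqP: Hd.
  have Hji : nat_of_ord j = i.+1 by apply: (allowed_delete_gap Hp (ltn_ord j) Hi); rewrite Hj.
  by apply: val_inj; rewrite /= -(delete_atE x0) // -Hji Hj.
rewrite -mulr_sumr exchange_big /=; congr (_ * _); apply: eq_bigr => c _.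
by rewrite -big_mkcond (big_pred1 (tinsert x0 i.+1 c q)) // => p; rewrite eq_sym.
Qed.

Definition Omega_cond n (u : chain K V n.+1) : Prop :=
  (forall p : n.+1.-tuple V, ~~ allowed E p -> u p = 0) /\
  (forall (q : n.-tuple V) i, (i.+1 < n)%N -> regular q -> ~~ arrow_at q i ->
     \sum_(c : V) u (tinsert x0 i.+1 c q) = 0).

Lemma Omega_condP n (u : chain K V n.+1) : u \in Omega K E n <-> Omega_cond u.
Proof.
split=> [/OmegaP[Hu Hbnd]|[Hu Hgap]].
  split=> // q i Hi Hr Hq.
  have Hna : ~~ allowed E q.
    by apply/negP => /allowedP Hal; case/negP: Hq; apply: Hal; rewrite size_tuple.
  have /eqP := Hbnd q Hr Hna; rewrite (bnd_gap Hu Hi Hq) mulf_eq0 signr_eq0.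
  by move/eqP.
apply/OmegaP; split=> // q Hr /allowedP Hna.
have [k /andP[Hk Hq]|Hnone] := pickP (fun k : 'I_n => (k.+1 < n)%N && ~~ arrow_at q k).
  by rewrite (bnd_gap Hu Hk Hq) Hgap ?mulr0.
case: Hna => k; rewrite size_tuple => Hk; have Hk' : (k < n)%N by lia.
by move: (Hnone (Ordinal Hk')); rewrite /= Hk /= => /negbFE.
Qed.

End OmegaMembership.

Local Notation Z5 := 'Z_5.
Local Notation S12 := [set (1 : Z5); 2].

Ltac case_Z5 x := case: x => -[|[|[|[|[|//]]]]] ?.

Lemma mem_S12 (x : Z5) : (x \in S12) = (x == 1) || (x == 2).
Proof. by rewrite !inE. Qed.

Lemma S12_neq0 (s : Z5) : s \in S12 -> s != 0.
Proof. by rewrite mem_S12; case_Z5 s. Qed.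

Lemma S12_add_neq0 (s t : Z5) : s \in S12 -> t \in S12 -> s + t != 0.
Proof. by rewrite !mem_S12; case_Z5 s; case_Z5 t. Qed.

Lemma S12_split4 (e : Z5) : (e \in S12) && ((2 + 2) - e \in S12) = (e == 2).
Proof. by rewrite !mem_S12; case_Z5 e. Qed.

Lemma S12_split3 (e : Z5) : (e \in S12) && ((1 + 2) - e \in S12) = (e == 1) || (e == 2).
Proof. by rewrite !mem_S12; case_Z5 e. Qed.

Definition step (s : seq Z5) k := s`_k.+1 - s`_k.

Lemma allowed_C5P (s : seq Z5) :
  reflect (forall k, (k.+1 < size s)%N -> step s k \in S12) (allowed C5_12 s).
Proof. exact: allowedP. Qed.

Lemma allowed_step n (p : n.+1.-tuple Z5) k :
  allowed C5_12 p -> (k < n)%N -> step p k = 1 \/ step p k = 2.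
Proof.
move=> /allowed_C5P Hp Hk; have := Hp k; rewrite size_tuple mem_S12 => /(_ Hk).
by case/orP => /eqP; [left | right].
Qed.

Lemma nth_succ_step (s : seq Z5) k : s`_k.+1 = s`_k + step s k.
Proof. by rewrite /step addrC subrK. Qed.

Lemma tset_succ N (p : N.-tuple Z5) k d : step p k = d -> tset 0 p k.+1 (p`_k + d) = p.
Proof. by move=> <-; rewrite -nth_succ_step tset_nth. Qed.

Lemma step_add (s : seq Z5) i : s`_i.+2 - s`_i = step s i + step s i.+1.
Proof. rewrite /step; ring. Qed.

Lemma eq_tuple_steps N (p q : N.+1.-tuple Z5) :
  p`_0 = q`_0 -> (forall k, (k < N)%N -> step p k = step q k) -> p = q.
Proof.
move=> H0 Hstep; apply: (eq_from_nth_tuple (x0 := 0)); elim=> [//|k IH] Hk.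
by rewrite !nth_succ_step IH ?Hstep //; lia.
Qed.

Lemma step_tset n (p : n.+1.-tuple Z5) i e k : (i.+1 < n)%N -> (k < n)%N ->
  step (tset 0 p i.+1 (p`_i + e)) k =
  if k == i then e else if k == i.+1 then step p i + step p i.+1 - e else step p k.
Proof.
move=> Hi Hk; rewrite /step !nth_nat_tuple ?eqSS //; last by lia.
case: (k =P i) => [->|_]; first by rewrite (ltn_eqF (ltnSn i)); ring.
by case: (k =P i.+1) => [->|//]; ring.
Qed.

Lemma allowed_tset n (p : n.+1.-tuple Z5) i e : (i.+1 < n)%N -> allowed C5_12 p ->
  allowed C5_12 (tset 0 p i.+1 (p`_i + e)) =
  (e \in S12) && (step p i + step p i.+1 - e \in S12).
Proof.
move=> Hi /allowed_C5P Hp; have Hi' : (i < n)%N by lia.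
apply/allowed_C5P/andP => [He|[He1 He2] k].
  split; [move: (He i) | move: (He i.+1)];
    by rewrite size_tuple step_tset ?eqxx ?(gtn_eqF (ltnSn i)) //; apply; lia.
rewrite size_tuple ltnS => Hk; rewrite step_tset //.
by case: ifP => // _; case: ifP => // _; apply: Hp; rewrite size_tuple.
Qed.

Lemma regular_tdelete n (p : n.+1.-tuple Z5) i : (i.+1 < n)%N -> allowed C5_12 p ->
  regular (tdelete 0 p i.+1).
Proof.
move=> Hi /allowed_C5P Hp; apply/(regularP 0) => k; rewrite size_tuple => Hk.
have Hstep m : (m < n)%N -> step p m \in S12 by move=> Hm; apply: Hp; rewrite size_tuple.
rewrite eq_sym -subr_eq0 /tdelete !nth_nat_tuple //; last by lia.
case: (ltngtP k i) => Hki.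
- by rewrite !ltnS Hki (ltnW Hki) S12_neq0 // Hstep; lia.
- by rewrite !ltnS ltnNge (ltnW Hki) leqNgt Hki S12_neq0 // Hstep.
- by rewrite Hki !ltnS ltnn leqnn step_add S12_add_neq0 // Hstep; lia.
Qed.

Definition unit_path n (a : Z5) : n.+1.-tuple Z5 := nat_tuple n.+1 (fun k => a + k%:R).

Lemma step_shift (a : Z5) k d : (a + (d + k)%:R) - (a + k%:R) = d%:R.
Proof. rewrite natrD; ring. Qed.

Lemma unit_path0 n a : (unit_path n a)`_0 = a.
Proof. by rewrite nth_nat_tuple // addr0. Qed.

Lemma step_unit_path n a k : (k < n)%N -> step (unit_path n a) k = 1.
Proof.
move=> Hk; rewrite /step !nth_nat_tuple; try lia.
by rewrite -[k.+1]add1n step_shift.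
Qed.

Lemma skip_path_nat_tuple n a j :
  skip_path n a j = nat_tuple n.+1 (fun k => a + (if (k < j)%N then k else k.+1)%:R).
Proof. by []. Qed.

Lemma skip_path0 n a j : (0 < j)%N -> (skip_path n a j)`_0 = a.
Proof. by move=> Hj; rewrite skip_path_nat_tuple nth_nat_tuple // Hj addr0. Qed.

Lemma step_skip_path n a j k : (k < n)%N ->
  step (skip_path n a j) k = if k.+1 == j then 2 else 1.
Proof.
move=> Hk; rewrite /step skip_path_nat_tuple !nth_nat_tuple; try lia.
case: ltngtP => _.
- by rewrite -[k.+1]add1n step_shift.
- by rewrite -[k.+2]add1n step_shift.
- by rewrite -[k.+2]add2n step_shift.
Qed.

Lemma unit_pathE n (q : n.+1.-tuple Z5) :
  (forall k, (k < n)%N -> step q k = 1) -> q = unit_path n q`_0.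
Proof.
by move=> Hq; apply: eq_tuple_steps => [|k Hk]; rewrite ?unit_path0 ?step_unit_path ?Hq.
Qed.

Lemma skip_pathE n (q : n.+1.-tuple Z5) i : step q i = 2 ->
  (forall k, (k < n)%N -> k != i -> step q k = 1) -> q = skip_path n q`_0 i.+1.
Proof.
move=> Hi Hq; apply: eq_tuple_steps => [|k Hk]; first by rewrite skip_path0.
by rewrite step_skip_path // eqSS; case: eqP => [->|/eqP]; [|apply: Hq].
Qed.

Lemma eq_unit_path_long n (q : n.+1.-tuple Z5) a i : (i < n)%N -> step q i = 2 ->
  (q == unit_path n a) = false.
Proof. by move=> Hi Hq; apply/negbTE/eqP => E; move: Hq; rewrite E step_unit_path // => /eqP. Qed.

Lemma eq_skip_path_two_long n (q : n.+1.-tuple Z5) a j i i' :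
  (i < n)%N -> (i' < n)%N -> i != i' -> step q i = 2 -> step q i' = 2 ->
  (q == skip_path n a j) = false.
Proof.
move=> Hi Hi' Hii' H1 H2; apply/negbTE/eqP => E.
have long_at k : (k < n)%N -> step q k = 2 -> k.+1 = j.
  by move=> Hk; rewrite E step_skip_path //; case: eqP => [//|_ /eqP].
by move: Hii'; rewrite -eqSS (long_at i) // (long_at i') // eqxx.
Qed.

Section OmegaRelations.
Variables (K : fieldType) (n : nat) (u : chain K Z5 n.+1).
Hypothesis Hu : Omega_cond C5_12 0 u.

Lemma detour_sum_eq0 (p : n.+1.-tuple Z5) i : (i.+1 < n)%N -> allowed C5_12 p ->
  step p i + step p i.+1 \notin S12 ->
  \sum_(e : Z5 | (e \in S12) && (step p i + step p i.+1 - e \in S12))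
     u (tset 0 p i.+1 (p`_i + e)) = 0.
Proof.
move=> Hi Hp Hgap; case: Hu => Hsupp Hsum; have Hi' : (i.+1 <= n)%N by lia.
have Hq : ~~ arrow_at C5_12 0 (tdelete 0 p i.+1) i.
  rewrite /arrow_at /tdelete !nth_nat_tuple ?ltnSn ?ltnn; try lia.
  by rewrite /C5_12 /circulant step_add.
have := Hsum _ _ Hi (regular_tdelete Hi Hp) Hq.
under eq_bigr => c _ do rewrite tinsert_tdelete //.
rewrite (reindex_inj (addrI p`_i)) /= => Hsum0; apply: etrans Hsum0.
rewrite big_mkcond /=; apply: eq_bigr => e _.
by case: ifP => // He; rewrite Hsupp // allowed_tset // He.
Qed.

Lemma coef_consecutive_long_steps (p : n.+1.-tuple Z5) i : (i.+1 < n)%N -> allowed C5_12 p ->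
  step p i = 2 -> step p i.+1 = 2 -> u p = 0.
Proof.
move=> Hi Hp H1 H2; have := detour_sum_eq0 Hi Hp.
rewrite H1 H2 (eq_bigl _ _ S12_split4) big_pred1_eq.
by rewrite (tset_succ H1); apply; rewrite mem_S12.
Qed.

Lemma coef_swap_steps (p : n.+1.-tuple Z5) i : (i.+1 < n)%N -> allowed C5_12 p ->
  step p i + step p i.+1 = 1 + 2 ->
  u (tset 0 p i.+1 (p`_i + 1)) + u (tset 0 p i.+1 (p`_i + 2)) = 0.
Proof.
move=> Hi Hp Hs; have := detour_sum_eq0 Hi Hp; rewrite Hs (eq_bigl _ _ S12_split3).
rewrite (bigD1 1) //= (eq_bigl (fun e => e == 2)) => [|e]; last by case_Z5 e.
by rewrite big_pred1_eq; apply; rewrite mem_S12.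
Qed.

(* Swaps move the right long step leftwards until the two long steps are adjacent. *)
Lemma coef_two_long_steps (p : n.+1.-tuple Z5) i j :
  (i < n)%N -> (j < n)%N -> i != j -> allowed C5_12 p ->
  step p i = 2 -> step p j = 2 -> u p = 0.
Proof.
wlog Hij : i j / (i < j)%N => [Hw Hi Hj Hne Hp H1 H2|_ Hj _].
  case: (ltngtP i j) => Hlt; first exact: (Hw i j).
    by apply: (Hw j i) => //; rewrite eq_sym.
  by rewrite Hlt eqxx in Hne.
elim: j Hij Hj p => // j IH Hij Hj p Hp Hi Hj2.
have [Eij|Hij'] := eqVneq i j.
  by rewrite -Eij in Hj Hj2; exact: coef_consecutive_long_steps Hj Hp Hi Hj2.
case: (allowed_step Hp (ltnW Hj)) => Hj1; last by apply: IH Hp Hi Hj1; lia.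
have Hs : step p j + step p j.+1 = 1 + 2 by rewrite Hj1 Hj2.
have := coef_swap_steps Hj Hp Hs; rewrite (tset_succ Hj1).
set p' := tset 0 p j.+1 _; have Hp' : allowed C5_12 p'.
  by rewrite /p' allowed_tset // Hs !mem_S12.
suff -> : u p' = 0 by rewrite addr0.
apply: (IH _ _ p' Hp'); try lia.
  by rewrite /p' step_tset ?ifF //; lia.
by rewrite /p' step_tset ?eqxx //; lia.
Qed.

Lemma coef_one_long_step (p : n.+1.-tuple Z5) i : (i < n)%N -> allowed C5_12 p ->
  step p i = 2 -> (forall k, (k < n)%N -> k != i -> step p k = 1) ->
  u p = (-1) ^+ (n - i.+1) * u (skip_path n p`_0 n).
Proof.
move Hm : (n - i.+1)%N => m; elim: m p i Hm => [|m IH] p i Hm Hi Hp Hlong Hunit.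
  by rewrite expr0 mul1r {1}(skip_pathE Hlong Hunit); congr (u (skip_path _ _ _)); lia.
have Hi1 : (i.+1 < n)%N by lia.
have Hunit1 : step p i.+1 = 1 by apply: Hunit; lia.
have Hs : step p i + step p i.+1 = 1 + 2 by rewrite Hlong Hunit1 addrC.
have := coef_swap_steps Hi1 Hp Hs; rewrite (tset_succ Hlong).
set p' := tset 0 p i.+1 _ => Hswap.
have Hp' : allowed C5_12 p' by rewrite /p' allowed_tset // Hs !mem_S12.
have Hp'0 : p'`_0 = p`_0 by rewrite nth_nat_tuple.
have Hlong' : step p' i.+1 = 2.
  by rewrite /p' step_tset // (gtn_eqF (ltnSn i)) eqxx Hs; apply/eqP.
have Hunit' k : (k < n)%N -> k != i.+1 -> step p' k = 1.
  move=> Hk Hki; rewrite /p' step_tset // (negbTE Hki).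
  by case: eqP => [//|/eqP Hki']; apply: Hunit.
have Hm' : (n - i.+2)%N = m by lia.
rewrite -[u p](addKr (u p')) Hswap addr0 (IH p' i.+1 Hm' Hi1 Hp' Hlong' Hunit') Hp'0.
by rewrite exprS mulN1r mulNr.
Qed.

End OmegaRelations.

Lemma unit_path_allowed n a : allowed C5_12 (unit_path n a).
Proof.
apply/allowed_C5P => k; rewrite size_tuple ltnS => Hk.
by rewrite step_unit_path // mem_S12.
Qed.

Lemma skip_path_allowed n a j : allowed C5_12 (skip_path n a j).
Proof.
apply/allowed_C5P => k; rewrite size_tuple ltnS => Hk.
by rewrite step_skip_path // mem_S12; case: ifP.
Qed.

Lemma skip_path_neq_unit n a b j : (0 < j <= n)%N ->
  (skip_path n a j == unit_path n b) = false.
Proof.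
move=> Hj; have Hk : (j.-1 < n)%N by lia.
by apply: (eq_unit_path_long b Hk); rewrite step_skip_path // prednK ?eqxx //; lia.
Qed.

Lemma eq_skip_path n a j j' : (0 < j <= n)%N -> (0 < j' <= n)%N ->
  (skip_path n a j == skip_path n a j') = (j == j').
Proof.
move=> Hj Hj'; have Hk : (j.-1 < n)%N by lia.
apply/eqP/eqP => [E|-> //]; have := step_skip_path a j Hk.
rewrite E step_skip_path // prednK ?eqxx; last by lia.
by case: eqP => // _ /eqP.
Qed.

Lemma arrow_tdelete_skip_path n a i j : (i.+1 < n)%N -> j != i -> j != i.+1 ->
  arrow_at C5_12 0 (tdelete 0 (skip_path n a j.+1) i.+1) i.
Proof.
move=> Hi Hji Hji1; rewrite /arrow_at /tdelete !nth_nat_tuple ?ltnSn ?ltnn; try lia.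
rewrite /C5_12 /circulant step_add !step_skip_path ?eqSS 1?eq_sym ?(negbTE Hji); try lia.
by rewrite eq_sym (negbTE Hji1) mem_S12.
Qed.

Lemma tdelete_skip_path n a i : (i.+1 < n)%N ->
  tdelete 0 (skip_path n a i.+1) i.+1 = tdelete 0 (skip_path n a i.+2) i.+1.
Proof.
move=> Hi; apply: (eq_from_nth_tuple (x0 := 0)) => k Hk.
rewrite /tdelete !nth_nat_tuple ?skip_path_nat_tuple ?nth_nat_tuple //; try (case: ifP; lia).
case: (ltnP k i.+1) => Hki /=; first by rewrite Hki (leqW Hki).
by rewrite !ifF //; lia.
Qed.

Section AlphaBeta.
Variables (K : fieldType) (n : nat).

Lemma alphaE a : alpha K n a = epath K (unit_path n a).
Proof. by []. Qed.

Lemma beta_coef a (p : n.+1.-tuple Z5) :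
  beta K n a p =
  \sum_(j < n) (-1) ^+ (n - j.+1) * (if p == skip_path n a j.+1 then 1 else 0).
Proof.
rewrite /beta sum_ffunE big_add1 /= big_mkord; apply: eq_bigr => j _.
by rewrite !ffunE.
Qed.

Lemma alpha_in_Omega a : Omega_cond C5_12 0 (alpha K n a).
Proof.
split=> [p|q i Hi _ Hq]; rewrite alphaE.
  by rewrite ffunE; case: eqP => // -> /negP; rewrite unit_path_allowed.
apply: big1 => c _; rewrite ffunE; case: eqP => // Eq; case/negP: Hq.
rewrite /arrow_at -(nth_tinsert_lt 0 q c (ltnSn i)); last by lia.
rewrite -(nth_tinsert_gt 0 q c (leqnn i.+1)) //.
rewrite Eq /C5_12 /circulant step_add !step_unit_path; try lia.
by rewrite !inE.
Qed.

Lemma beta_in_Omega a : Omega_cond C5_12 0 (beta K n a).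
Proof.
split=> [p Hp|q i Hi _ Hq].
  rewrite beta_coef big1 // => j _; case: eqP Hp => [->|_ _]; last exact: mulr0.
  by rewrite skip_path_allowed.
have Hi' : (i < n)%N by lia.
have Hi1 : (i.+1 <= n)%N by lia.
under eq_bigr => c _ do rewrite beta_coef.
rewrite exchange_big /=.
under eq_bigr => j _ do rewrite -mulr_sumr sum_tinsert //.
rewrite (bigD1 (Ordinal Hi')) //= (bigD1 (Ordinal Hi)) /=; last first.
  by rewrite -(inj_eq val_inj) /= (gtn_eqF (ltnSn i)).
rewrite big1 ?addr0 => [|j /andP[Hj1 Hj2]]; last first.
  rewrite -!(inj_eq val_inj) /= in Hj1 Hj2; rewrite ifF ?mulr0 //.
  by apply: contraNF Hq => /eqP <-; apply: arrow_tdelete_skip_path.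
rewrite -tdelete_skip_path // -subnSK // exprS mulN1r mulNr.
exact: addNr.
Qed.

End AlphaBeta.

Section Decomposition.
Variables (K : fieldType) (n : nat).

Lemma lincomb_coef (f g : Z5 -> K) (q : n.+1.-tuple Z5) :
  (\sum_a f a *: alpha K n a + \sum_a g a *: beta K n a) q =
  (if q == unit_path n q`_0 then f q`_0 else 0) +
  g q`_0 * \sum_(j < n) (-1) ^+ (n - j.+1) * (if q == skip_path n q`_0 j.+1 then 1 else 0).
Proof.
have unit_neq a : a != q`_0 -> (q == unit_path n a) = false.
  by move=> Ha; apply: contraNF Ha => /eqP ->; rewrite unit_path0.
have skip_neq a j : a != q`_0 -> (q == skip_path n a j.+1) = false.
  by move=> Ha; apply: contraNF Ha => /eqP ->; rewrite skip_path0.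
have alpha_sum : (\sum_a f a *: alpha K n a) q =
    if q == unit_path n q`_0 then f q`_0 else 0.
  rewrite sum_ffunE (bigD1 q`_0) //= big1 => [|a Ha]; last first.
    by rewrite !ffunE unit_neq ?scaler0.
  by rewrite addr0 !ffunE; case: ifP => _; [exact: mulr1 | exact: scaler0].
have beta_sum : (\sum_a g a *: beta K n a) q =
    g q`_0 * \sum_(j < n) (-1) ^+ (n - j.+1) * (if q == skip_path n q`_0 j.+1 then 1 else 0).
  rewrite sum_ffunE (bigD1 q`_0) //= big1 => [|a Ha]; last first.
    by rewrite !ffunE beta_coef big1 ?scaler0 // => j _; rewrite skip_neq ?mulr0.
  by rewrite addr0 !ffunE beta_coef.
by rewrite ffunE alpha_sum beta_sum.
Qed.

Lemma Omega_decomposition (u : chain K Z5 n.+1) : Omega_cond C5_12 0 u ->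
  u = \sum_a u (unit_path n a) *: alpha K n a + \sum_a u (skip_path n a n) *: beta K n a.
Proof.
move=> Hu; apply/ffunP => q; rewrite lincomb_coef.
have skip_ord (j : 'I_n) : (0 < j.+1 <= n)%N by rewrite ltn_ord.
have [Hq|Hna] := boolP (allowed C5_12 q); last first.
  have neq (p : n.+1.-tuple Z5) : allowed C5_12 p -> (q == p) = false.
    by move=> Hp; apply: contraNF Hna => /eqP ->.
  rewrite (proj1 Hu q Hna) neq ?unit_path_allowed // add0r big1 ?mulr0 // => j _.
  by rewrite neq ?skip_path_allowed ?mulr0.
case: (pickP (fun k : 'I_n => step q k == 2)) => [i /eqP Hi|Hnolong]; last first.
  have -> : q = unit_path n q`_0.
    apply: unit_pathE => k Hk; case: (allowed_step Hq Hk) => // H2.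
    by move: (Hnolong (Ordinal Hk)); rewrite /= H2 eqxx.
  rewrite unit_path0 eqxx big1 ?mulr0 ?addr0 // => j _.
  by rewrite eq_sym skip_path_neq_unit ?mulr0.
rewrite (eq_unit_path_long _ (ltn_ord i) Hi) add0r.
case: (pickP (fun k : 'I_n => (k != i) && (step q k == 2))) => [i' /andP[Hii' /eqP Hi']|Hsingle].
  have Hne : (i : nat) != i' by rewrite val_eqE eq_sym.
  rewrite (coef_two_long_steps Hu (ltn_ord i) (ltn_ord i') Hne Hq Hi Hi').
  rewrite big1 ?mulr0 // => j _.
  by rewrite (eq_skip_path_two_long _ _ (ltn_ord i) (ltn_ord i') Hne Hi Hi') mulr0.
have Hunit k : (k < n)%N -> k != i -> step q k = 1.
  move=> Hk Hki; case: (allowed_step Hq Hk) => // H2.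
  by move: (Hsingle (Ordinal Hk)); rewrite /= Hki H2 eqxx.
have Eq := skip_pathE Hi Hunit.
rewrite (coef_one_long_step Hu (ltn_ord i) Hq Hi Hunit) mulrC; congr (_ * _).
rewrite (bigD1 i) //= big1 ?addr0 => [|j Hji]; first by rewrite {1}Eq eqxx mulr1.
by rewrite {1}Eq eq_skip_path // eqSS val_eqE eq_sym (negbTE Hji) mulr0.
Qed.

End Decomposition.

Lemma alpha_beta_free (K : fieldType) n (f g : Z5 -> K) : (0 < n)%N ->
  \sum_a f a *: alpha K n a + \sum_a g a *: beta K n a = 0 ->
  (forall a, f a = 0) /\ (forall a, g a = 0).
Proof.
move=> Hn /ffunP H; split=> a.
  move: (H (unit_path n a)); rewrite lincomb_coef unit_path0 eqxx ffunE.
  by rewrite big1 ?mulr0 ?addr0 // => j _; rewrite eq_sym skip_path_neq_unit ?mulr0 // ltn_ord.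
move: (H (skip_path n a n)); rewrite lincomb_coef skip_path0 // skip_path_neq_unit ?add0r;
  last by lia.
have Hn' : (n.-1 < n)%N by lia.
rewrite (bigD1 (Ordinal Hn')) //= prednK // eqxx subnn expr0 mulr1 big1 ?addr0 ?mulr1 ?ffunE //.
move=> j; rewrite -(inj_eq val_inj) /= => Hj; have Hjn := ltn_ord j.
by rewrite eq_skip_path ?ifF ?mulr0 //; lia.
Qed.

Lemma free_cat_families (K : fieldType) (vT : vectType K) m (a b : 'I_m -> vT) :
  (forall f g : 'I_m -> K, \sum_i f i *: a i + \sum_i g i *: b i = 0 ->
     (forall i, f i = 0) /\ (forall i, g i = 0)) ->
  free ([seq a i | i <- enum 'I_m] ++ [seq b i | i <- enum 'I_m]).
Proof.
move=> Hab; set X := _ ++ _.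
have nthXl (i : 'I_m) : X`_(lshift m i) = a i.
  by rewrite nth_cat size_map size_enum_ord /= ltn_ord (nth_map i) ?size_enum_ord ?nth_ord_enum.
have nthXr (i : 'I_m) : X`_(rshift m i) = b i.
  rewrite nth_cat size_map size_enum_ord /= ltnNge leq_addr /= addKn.
  by rewrite (nth_map i) ?size_enum_ord ?nth_ord_enum.
have freeX (k : 'I_(size X) -> K) : \sum_i k i *: X`_i = 0 -> forall i, k i = 0.
  have sizeX : size X = (m + m)%N by rewrite /X size_cat !size_map -enumT size_enum_ord.
  move: k; rewrite sizeX => k Hk.
  rewrite big_split_ord /= in Hk.
  rewrite (eq_bigr (fun i => k (lshift m i) *: a i)) in Hk; last by move=> i _; rewrite nthXl.
  rewrite [X in _ + X](eq_bigr (fun i => k (rshift m i) *: b i)) in Hk; last first.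
    by move=> i _; rewrite nthXr.
  have [Hf Hg] := Hab _ _ Hk => i.
  by case: (splitP i) => j Hj; [rewrite (_ : i = lshift m j) | rewrite (_ : i = rshift m j)];
    rewrite ?Hf ?Hg //; apply: val_inj.
by rewrite -(in_tupleE X); apply/freeP => k Hk i; exact: freeX Hk i.
Qed.

(* Keeps [K] an explicit argument, as in the statement. *)
Unset Implicit Arguments.

Theorem mainTheorem1 (K : fieldType) (hK : [pchar K] =i pred0) (n : nat) (hn : (1 <= n)%N) :
  let B := [seq alpha K n a | a <- enum 'Z_5] ++ [seq beta K n a | a <- enum 'Z_5] in
  \dim (Omega K C5_12 n) = 10%N /\ basis_of (Omega K C5_12 n) B.
Proof.
move=> B.
have BinOmega : {subset B <= Omega K C5_12 n}.
  move=> v; rewrite mem_cat => /orP[] /mapP[a _ ->]; apply/Omega_condP.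
  - exact: alpha_in_Omega.
  - exact: beta_in_Omega.
have spanB : (<<B>> = Omega K C5_12 n)%VS.
  apply/eqP; rewrite eqEsubv; apply/andP; split; first exact/span_subvP.
  apply/subvP => u /Omega_condP/Omega_decomposition ->.
  by apply: memvD; apply: memv_suml => a _; apply/memvZ/memv_span;
    rewrite mem_cat map_f ?mem_enum ?orbT.
have freeB : free B by apply: free_cat_families => f g; apply: alpha_beta_free.
split; last by rewrite /basis_of spanB eqxx freeB.
by rewrite -spanB (eqP freeB) size_cat !size_map -enumT size_enum_ord.
Qed.
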